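(* There is a universal constant $C_{\mathrm{hg}}>1$ such that the following holds. Let $m_1,k,s$ be positive integers and let $T_0,T_1,\dots,T_k$ be independent random subsets of $[m_1]$, where $T_0$ is uniformly distributed among subsets of size $s_0$, and for $j\in[k]$, $T_j$ is uniformly distributed among subsets of size $s_j$ with $1\le s_j\le s$. Let $\bar T_l=\bigcup_{i=0}^l T_i$, $X_l=|\bar T_{l-1}\cap T_l|$ for $l\in[k]$, and $S=\sum_{j=0}^k s_j$. Then for every $t>\max\{6Ss/m_1,1\}$, $$\mathbb{P}\Big\{\sum_{i=1}^kX_i\ge tk\Big\}\le C_{\mathrm{hg}}^k\exp\Big(-\log\Big(\frac{t}{6Ss/m_1}\Big)tk\Big).$$
   Context: $[m]=\{1,\dots,m\}$. *)

From mathcomp Require Import all_boot.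
From Stdlib Require Import Reals.

Set Implicit Arguments.
Unset Strict Implicit.
Unset Printing Implicit Defensive.

(* Independence + uniformity of each T_j
   means the joint law is the uniform distribution on this finite set. *)
Definition sample_space (m1 k : nat) (sz : nat -> nat)
  : {set {ffun 'I_k.+1 -> {set 'I_m1}}} :=
  [set T : {ffun 'I_k.+1 -> {set 'I_m1}} | [forall j : 'I_k.+1, #|T j| == sz j]].

Definition X (m1 k : nat) (T : {ffun 'I_k.+1 -> {set 'I_m1}}) (l : 'I_k.+1) : nat :=
  #|(\bigcup_(i < k.+1 | (i < l)%N) T i) :&: T l|.

Definition Xsum (m1 k : nat) (T : {ffun 'I_k.+1 -> {set 'I_m1}}) : nat :=
  (\sum_(l < k.+1 | (0 < l)%N) X T l)%N.

Definition prob (m1 k : nat) (sz : nat -> nat)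
  (E : pred {ffun 'I_k.+1 -> {set 'I_m1}}) : R :=
  Rdiv (INR #|[set T in sample_space m1 k sz | E T]|) (INR #|sample_space m1 k sz|).
Arguments prob m1 k sz E : clear implicits.

From Stdlib Require Import Reals Lra.
From mathcomp Require Import all_boot all_order all_algebra.
From mathcomp Require Import Rstruct zify.

Set Implicit Arguments.
Unset Strict Implicit.
Unset Printing Implicit Defensive.

Import Order.TTheory GRing.Theory Num.Theory.

(* For x >= 0 the bound follows from the moment estimate
     E[(1 + x) ^ overlaps(T)] <= (1 + x s / m1) ^ (k S),                (star)
   Markov's inequality in the form P(X >= a) <= E[(1+x)^X] / (1+x)^a, and the
   choice 1 + x = t / (S s / m1), which yields the bound with C_hg = 2. *)

(* The b-subsets of T containing W correspond, via B |-> B :\: W, to the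
   (b - |W|)-subsets of the complement of W. *)
Lemma card_supsets (T : finType) (W : {set T}) b : #|W| <= b ->
  #|[set B : {set T} | #|B| == b & W \subset B]| = 'C(#|T| - #|W|, b - #|W|).
Proof.
move=> leWb.
have -> : #|T| - #|W| = #|~: W| by rewrite [#|~: W|]cardsCs setCK.
rewrite -cards_draws.
have setDUK (B : {set T}) : W \subset B -> B :\: W :|: W = B.
  by move=> sWB; rewrite setDE setUIl [~: W :|: W]setUC setUCr setIT; apply/setUidPl.
have injD : {in [set B : {set T} | #|B| == b & W \subset B] &,
               injective (fun B => B :\: W)}.
  move=> B1 B2; rewrite !inE => /andP[_ sWB1] /andP[_ sWB2] eqD.
  by rewrite -(setDUK _ sWB1) eqD setDUK.
rewrite -(card_in_imset injD); apply: eq_card => A; rewrite inE.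
apply/imsetP/andP => [[B] | [sAW /eqP cardA]].
  rewrite inE => /andP[/eqP cardB sWB] ->.
  by rewrite cardsDS // cardB setDE subsetIr.
have disjAW : A :&: W = set0.
  by apply/disjoint_setI0; move: sAW; rewrite subsets_disjoint setCK.
exists (A :|: W); last by rewrite setDUl setDv setU0 setDE; apply/esym/setIidPl.
by rewrite inE cardsU disjAW cards0 subn0 cardA subnK // eqxx subsetUr.
Qed.

(* Induction on w,
   using the absorption identity (b + 1) 'C(m + 1, b + 1) = (m + 1) 'C(m, b)
   and b (m + 1) <= (b + 1) m. *)
Lemma bin_ratio w m b : w <= b -> b <= m ->
  'C(m - w, b - w) * m ^ w <= 'C(m, b) * b ^ w.
Proof.
elim: w m b => [|w IHw] m b; first by rewrite !subn0 !muln1.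
case: b => // b; case: m => // m; rewrite !ltnS !subSS => lewb lebm.
have [m0|m_gt0] := posnP m.
  by move: lebm lewb; rewrite m0 leqn0 => /eqP->; rewrite leqn0 => /eqP->.
have absorption : b.+1 * 'C(m.+1, b.+1) = m.+1 * 'C(m, b) := esym (mul_bin_diag m.+1 b).
have cross : (b * m.+1) ^ w <= (b.+1 * m) ^ w.
  by have [->//|w_gt0] := posnP w; rewrite leq_exp2r //; nia.
rewrite -(@leq_pmul2l (m ^ w)) ?expn_gt0 ?m_gt0 //.
apply: (@leq_trans ('C(m, b) * b ^ w * m.+1 ^ w.+1)).
  by rewrite mulnA [m ^ w * _]mulnC leq_mul2r IHw ?orbT.
have -> : 'C(m, b) * b ^ w * m.+1 ^ w.+1 = 'C(m, b) * m.+1 * (b * m.+1) ^ w.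
  by rewrite expnMn expnS; lia.
have -> : m ^ w * ('C(m.+1, b.+1) * b.+1 ^ w.+1) = 'C(m, b) * m.+1 * (b.+1 * m) ^ w.
  by have := congr1 (muln (m ^ w * b.+1 ^ w)) absorption; rewrite expnMn expnS; lia.
by rewrite leq_mul2l cross orbT.
Qed.

Section SubsetMoments.

Local Open Scope ring_scope.

Lemma sum_pow_subsets (R : comPzSemiRingType) (T : finType) (C : {set T}) (x : R) :
  \sum_(W : {set T} | W \subset C) x ^+ #|W| = (1 + x) ^+ #|C|.
Proof.
pose F i : R := if i \in C then x else 0.
have := bigA_distr 1 +%R F (fun _ => 1 : R).
rewrite (bigID (mem C)) /= (eq_bigr (fun _ => x + 1)) ?prodr_const; last first.
  by move=> i Ci; rewrite /F Ci.
rewrite big1 ?mulr1 => [|i /negbTE Ci]; last by rewrite /F Ci add0r.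
rewrite addrC => ->; rewrite big_mkcond /=; apply: eq_bigr => J _.
rewrite (bigID (mem J)) /= [X in _ * X]big1 ?mulr1 => [|i /negbTE ->//].
have [sJC | /subsetPn[i Ji Ci]] := boolP (J \subset C).
  rewrite -prodr_const; apply: eq_bigr => i Ji.
  by rewrite Ji /F (subsetP sJC).
by rewrite (bigD1 i) //= Ji /F (negbTE Ci) mul0r.
Qed.

Variables (R : numFieldType) (T : finType).

Lemma card_supsets_le (W : {set T}) b : (0 < #|T|)%N -> (b <= #|T|)%N ->
  #|[set B : {set T} | #|B| == b & W \subset B]|%:R
    <= 'C(#|T|, b)%:R * (b%:R / #|T|%:R) ^+ #|W| :> R.
Proof.
move=> T_gt0 lebT.
have [leWb | ltbW] := leqP #|W| b.
  rewrite card_supsets // expr_div_n mulrA ler_pdivlMr ?exprn_gt0 ?ltr0n //.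
  by rewrite -!natrX -!natrM ler_nat bin_ratio.
rewrite (_ : [set B | _] = set0) ?cards0 ?mulr_ge0 ?exprn_ge0 ?divr_ge0 //.
apply/setP => B; rewrite !inE; apply/negbTE/andP => -[/eqP cardB /subset_leq_card].
by rewrite cardB leqNgt ltbW.
Qed.

(* Expand the power over the
   subsets W of A :&: B and count the B containing each W. *)
Lemma overlap_moment (A : {set T}) b (x : R) :
  0 <= x -> (0 < #|T|)%N -> (b <= #|T|)%N ->
  \sum_(B : {set T} | #|B| == b) (1 + x) ^+ #|A :&: B|
    <= 'C(#|T|, b)%:R * (1 + x * (b%:R / #|T|%:R)) ^+ #|A|.
Proof.
move=> x_ge0 T_gt0 lebT.
under eq_bigr => B _ do rewrite -sum_pow_subsets.
rewrite (exchange_big_dep (fun W : {set T} => W \subset A)) /=; last first.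
  by move=> B W _; rewrite subsetI => /andP[].
rewrite -sum_pow_subsets mulr_sumr; apply: ler_sum => W sWA.
rewrite (eq_bigl (mem [set B : {set T} | #|B| == b & W \subset B])); last first.
  by move=> B; rewrite !inE subsetI sWA.
rewrite sumr_const exprMn mulrCA -[X in X <= _]mulr_natr.
by rewrite ler_wpM2l ?exprn_ge0 ?card_supsets_le.
Qed.

End SubsetMoments.

Section SizedFamilies.

Variable U : finType.

Definition fcons n (B : {set U}) (T : {ffun 'I_n -> {set U}})
  : {ffun 'I_n.+1 -> {set U}} :=
  [ffun i => if unlift ord0 i is Some j then T j else B].

Definition sized_family n (f : nat -> nat) : pred {ffun 'I_n -> {set U}} :=
  fun T => [forall j, #|T j| == f j].

Definition overlaps n (A : {set U}) (T : {ffun 'I_n -> {set U}}) : nat :=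
  \sum_(l < n) #|(A :|: \bigcup_(i < n | (i < l)%N) T i) :&: T l|.

Lemma fcons0 n B (T : {ffun 'I_n -> {set U}}) : fcons B T ord0 = B.
Proof. by rewrite ffunE unlift_none. Qed.

Lemma fconsS n B (T : {ffun 'I_n -> {set U}}) j : fcons B T (lift ord0 j) = T j.
Proof. by rewrite ffunE liftK. Qed.

Lemma sized_family_cons n f B (T : {ffun 'I_n -> {set U}}) :
  sized_family f (fcons B T) = (#|B| == f 0) && sized_family (f \o S) T.
Proof.
apply/forallP/andP => [sizedBT | [/eqP cardB /forallP sizedT] i].
  split; first by have := sizedBT ord0; rewrite fcons0.
  by apply/forallP => j; have := sizedBT (lift ord0 j); rewrite fconsS.
by case: (unliftP ord0 i) => [j ->|->]; rewrite ?fconsS ?sizedT ?fcons0 ?cardB.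
Qed.

Lemma big_sized_family_cons (V : Type) (idx : V) (op : Monoid.com_law idx)
    n f (F : {ffun 'I_n.+1 -> {set U}} -> V) :
  \big[op/idx]_(T | sized_family f T) F T =
  \big[op/idx]_(B : {set U} | #|B| == f 0)
     \big[op/idx]_(T | sized_family (f \o S) T) F (fcons B T).
Proof.
rewrite pair_big_dep /=.
rewrite (reindex (fun BT : {set U} * {ffun 'I_n -> {set U}} => fcons BT.1 BT.2)).
  by apply: eq_bigl => -[B T]; rewrite sized_family_cons.
exists (fun T : {ffun 'I_n.+1 -> {set U}} =>
          (T ord0, [ffun j => T (lift ord0 j)])) => [[B T] _ | T _] /=.
  by rewrite fcons0; congr pair; apply/ffunP => j; rewrite ffunE fconsS.
by apply/ffunP => i; case: (unliftP ord0 i) => [j ->|->]; rewrite ?fcons0 ?fconsS ?ffunE.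
Qed.

Lemma card_sized_family n f :
  \sum_(T : {ffun 'I_n -> {set U}} | sized_family f T) 1 = \prod_(i < n) 'C(#|U|, f i).
Proof.
elim: n f => [|n IHn] f.
  rewrite big_ord0 (eq_bigl xpredT) ?sum1_card ?card_ffun ?card_ord // => T.
  by apply/forallP => -[].
rewrite big_sized_family_cons big_ord_recl /=.
under eq_bigr do rewrite IHn.
rewrite sum_nat_const -card_draws; congr (_ * _).
by apply: eq_card => B; rewrite inE.
Qed.

Lemma overlaps_cons n (A B : {set U}) (T : {ffun 'I_n -> {set U}}) :
  overlaps A (fcons B T) = #|A :&: B| + overlaps (A :|: B) T.
Proof.
rewrite /overlaps big_ord_recl /=; congr addn.
  by rewrite big_pred0 ?setU0 ?fcons0 // => i; rewrite ltn0.
apply: eq_bigr => j _; rewrite fconsS; congr (#|_ :&: _|).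
rewrite big_mkcond big_ord_recl /= fcons0 -setUA; congr (_ :|: _).
rewrite [in RHS]big_mkcond; congr (_ :|: _); apply: eq_bigr => i _.
by rewrite fconsS /bump /= !add1n ltnS.
Qed.

End SizedFamilies.

Section FamilyMoment.

Local Open Scope ring_scope.

Variables (R : numFieldType) (U : finType) (x : R).
Hypotheses (x_ge0 : 0 <= x) (U_gt0 : (0 < #|U|)%N).

Let factor (b : nat) : R := 1 + x * (b%:R / #|U|%:R).

Lemma factor_ge1 b : 1 <= factor b.
Proof. by rewrite lerDl mulr_ge0 ?divr_ge0 ?ler0n. Qed.

Lemma factor_ge0 b : 0 <= factor b.
Proof. exact: le_trans ler01 (factor_ge1 b). Qed.

(* Moment bound for sized families: the l-th set T_l meets a history of size
   at most |A| + f 0 + ... + f (l - 1), whence the factor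
   factor (f l) ^ (|A| + f 0 + ... + f (l - 1)).  Induction on the length,
   peeling off the first set with [overlap_moment]. *)
Lemma family_moment n f (A : {set U}) :
  (forall i, (i < n)%N -> f i <= #|U|)%N ->
  \sum_(T : {ffun 'I_n -> {set U}} | sized_family f T) (1 + x) ^+ overlaps A T
    <= (\prod_(i < n) 'C(#|U|, f i))%:R *
       \prod_(l < n) factor (f l) ^+ (#|A| + \sum_(i < l) f i).
Proof.
elim: n f A => [|n IHn] f A size_f.
  under eq_bigr do rewrite /overlaps big_ord0 expr0.
  by rewrite (eq_bigr (fun _ => 1%:R)) // -natr_sum card_sized_family !big_ord0 mulr1.
have f0_le_U := size_f 0%N isT.
have size_fS i : (i < n)%N -> ((f \o S) i <= #|U|)%N by exact: size_f i.+1.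
set P := (\prod_(i < n) 'C(#|U|, f i.+1))%:R : R.
set Q := \prod_(l < n) factor (f l.+1) ^+ (#|A| + \sum_(i < l.+1) f i).
have tail_moment (B : {set U}) : #|B| == f 0 ->
    \sum_(T : {ffun 'I_n -> {set U}} | sized_family (f \o S) T)
      (1 + x) ^+ overlaps A (fcons B T) <= (1 + x) ^+ #|A :&: B| * (P * Q).
  move=> /eqP cardB; under eq_bigr do rewrite overlaps_cons exprD.
  rewrite -mulr_sumr ler_wpM2l ?exprn_ge0 ?addr_ge0 //.
  apply: le_trans (IHn _ (A :|: B) size_fS) _.
  rewrite ler_wpM2l ?ler0n //; apply: ler_prod => l _.
  rewrite exprn_ge0 ?factor_ge0 //= ler_weXn2l ?factor_ge1 //.
  by rewrite big_ord_recl addnA leq_add2r cardsU -cardB leq_subr.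
rewrite big_sized_family_cons; apply: le_trans (ler_sum _ tail_moment) _.
rewrite -mulr_suml.
apply: le_trans (ler_wpM2r _ (overlap_moment A x_ge0 U_gt0 f0_le_U)) _.
  by rewrite mulr_ge0 ?ler0n // prodr_ge0 // => l _; rewrite exprn_ge0 ?factor_ge0.
rewrite big_ord_recl natrM [\prod_(l < n.+1) _]big_ord_recl big_ord0 addn0.
by rewrite -!mulrA [_ ^+ #|A| * (P * _)]mulrCA.
Qed.

End FamilyMoment.

Lemma Xsum_overlaps m1 k (T : {ffun 'I_k.+1 -> {set 'I_m1}}) :
  Xsum T = overlaps set0 T.
Proof.
rewrite /Xsum /overlaps big_mkcond; apply: eq_bigr => -[[|l] lt_lk] _ /=.
  by rewrite big_pred0 // setU0 set0I cards0.
by rewrite /X set0U.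
Qed.

Lemma card_sample_space m1 k sz :
  #|sample_space m1 k sz| = \prod_(i < k.+1) 'C(m1, sz i).
Proof.
rewrite -[in RHS](card_ord m1) -card_sized_family sum1_card.
by apply: eq_card => T; rewrite inE.
Qed.

Section ExponentialMoment.

Local Open Scope ring_scope.

Variables (R : numFieldType) (m1 k s : nat) (sz : nat -> nat) (x : R).
Hypotheses (x_ge0 : 0 <= x) (m1_gt0 : (0 < m1)%N) (sz0_le_m1 : (sz 0 <= m1)%N).
Hypothesis size_sz : forall i, (i < k)%N -> (sz i.+1 <= s /\ sz i.+1 <= m1)%N.

(* Every factor in [family_moment] is at most 1 + x s/m1, the first one is
   raised to the power 0 and the others to powers at most S. *)
Lemma overlap_factors_le :
  \prod_(l < k.+1) (1 + x * ((sz l)%:R / m1%:R)) ^+ (\sum_(i < l) sz i)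
    <= (1 + x * (s%:R / m1%:R)) ^+ (k * \sum_(j < k.+1) sz j).
Proof.
have base_ge1 b : 1 <= 1 + x * (b%:R / m1%:R) :> R.
  by rewrite lerDl mulr_ge0 ?divr_ge0 ?ler0n.
rewrite big_ord_recl big_ord0 expr0 mul1r mulnC exprM.
rewrite -[k in _ ^+ k](card_ord k) -prodr_const.
apply: ler_prod => l _; rewrite exprn_ge0 ?(le_trans ler01 (base_ge1 _)) //=.
have [szl_le_s _] := size_sz (ltn_ord l).
apply: (le_trans (y := (1 + x * (s%:R / m1%:R)) ^+ (\sum_(i < l.+1) sz i))).
  rewrite lerXn2r ?nnegrE ?(le_trans ler01 (base_ge1 _)) //.
  by rewrite lerD2l ler_wpM2l // ler_wpM2r ?invr_ge0 ?ler0n ?ler_nat.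
rewrite ler_weXn2l // (big_ord_widen _ _ (leqW (ltn_ord l))).
by rewrite [X in (_ <= X)%N](bigID (fun i : 'I_k.+1 => (i < l.+1)%N)) leq_addr.
Qed.

Lemma exponential_moment :
  \sum_(T in sample_space m1 k sz) (1 + x) ^+ Xsum T
    <= #|sample_space m1 k sz|%:R *
       (1 + x * (s%:R / m1%:R)) ^+ (k * \sum_(j < k.+1) sz j).
Proof.
have size_all i : (i < k.+1)%N -> (sz i <= #|'I_m1|)%N.
  by rewrite card_ord; case: i => [|i /size_sz[]].
have U_gt0 : (0 < #|'I_m1|)%N by rewrite card_ord.
have moment := family_moment x_ge0 U_gt0 set0 size_all.
rewrite (eq_bigl (sized_family sz)) => [|T]; last by rewrite inE.
under eq_bigr do rewrite Xsum_overlaps.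
apply: le_trans moment _.
rewrite card_sample_space card_ord ler_wpM2l ?ler0n //.
under eq_bigr do rewrite cards0 add0n.
exact: overlap_factors_le.
Qed.

End ExponentialMoment.

Section Markov.

Local Open Scope ring_scope.

Lemma markov_count (R : numFieldType) (I : finType) (Omega : {set I})
    (E : pred I) (F : I -> R) (c : R) :
  (forall i, i \in Omega -> 0 <= F i) ->
  (forall i, i \in Omega -> E i -> c <= F i) ->
  #|[set i in Omega | E i]|%:R * c <= \sum_(i in Omega) F i.
Proof.
move=> F_ge0 F_ge_c; rewrite mulr_natl -sumr_const.
rewrite [X in X <= _]big_mkcond [X in _ <= X]big_mkcond /=.
apply: ler_sum => i _; rewrite inE.
by case: (boolP (i \in Omega)) => //= Oi; case: ifP => // Ei; [exact: F_ge_c | exact: F_ge0].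
Qed.

End Markov.

Delimit Scope R_scope with R.

Section RealBounds.

Local Open Scope R_scope.

Lemma exp_monotone (a b : R) : a <= b -> exp a <= exp b.
Proof.
by case/Rle_lt_or_eq_dec => [/exp_increasing/Rlt_le | ->] //; apply: Rle_refl.
Qed.

Lemma ln_ge0 (y : R) : 1 <= y -> 0 <= ln y.
Proof.
move=> y_ge1; rewrite -ln_1; case/Rle_lt_or_eq_dec: y_ge1 => [lt1y | <-].
  by apply/Rlt_le/ln_increasing; lra.
exact: Rle_refl.
Qed.

(* (1 + y)^n <= e^(y n), from 1 + y <= e^y. *)
Lemma pow_le_exp (y : R) (n : nat) : 0 <= y -> (1 + y) ^ n <= exp (y * INR n).
Proof.
move=> y_ge0; elim: n => [|n IHn]; first by rewrite /= Rmult_0_r exp_0; lra.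
rewrite S_INR Rmult_plus_distr_l Rmult_1_r exp_plus /= Rmult_comm.
by apply: Rmult_le_compat => //; [apply: pow_le; lra | lra | apply: exp_ineq1_le].
Qed.

Lemma exp_ln_le_pow (y a : R) (n : nat) :
  1 <= y -> a <= INR n -> exp (a * ln y) <= y ^ n.
Proof.
move=> y_ge1 le_an; have y_gt0 : 0 < y by lra.
rewrite -(exp_ln (y ^ n)) ?ln_pow //; last exact: pow_lt.
by apply/exp_monotone/Rmult_le_compat_r => //; apply: ln_ge0.
Qed.

(* Chernoff bound for every x >= 0:
   P(X_1 + ... + X_k >= a) <= exp (x (s/m1) S k - a ln (1 + x)).
   Markov's inequality for (1 + x)^(X_1 + ... + X_k), combined with (star). *)
Lemma overlap_tail_bound m1 k s sz (x a : R) :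
  0 <= x -> (0 < m1)%N -> (sz 0 <= m1)%N ->
  (forall i, (i < k)%N -> (sz i.+1 <= s /\ sz i.+1 <= m1)%N) ->
  prob m1 k sz (fun T => if Rle_dec a (INR (Xsum T)) then true else false)
    <= exp (x * INR s * INR (\sum_(j < k.+1) sz j) / INR m1 * INR k - a * ln (1 + x)).
Proof.
move=> x_ge0 m1_gt0 sz0_le_m1 size_sz.
set S := (\sum_(j < k.+1) sz j)%N.
set Omega := sample_space m1 k sz.
set Event := [set T in Omega | if Rle_dec a (INR (Xsum T)) then true else false].
set c := exp (a * ln (1 + x)).
set y := x * (INR s / INR m1).
have m1R_gt0 : 0 < INR m1 by apply: lt_0_INR; apply/ssrnat.ltP.
have y_ge0 : 0 <= y.
  apply: Rmult_le_pos => //; apply: Rmult_le_pos; first exact: pos_INR.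
  exact/Rlt_le/Rinv_0_lt_compat.
have Omega_gt0 : 0 < INR #|Omega|.
  apply: lt_0_INR; apply/ssrnat.ltP; rewrite card_sample_space prodn_gt0 // => -[[|i] lt_ik].
    by rewrite bin_gt0.
  by rewrite bin_gt0; case: (size_sz i lt_ik).
have markov : INR #|Event| * c <= INR #|Omega| * exp (y * INR (k * S)).
  apply/RleP; rewrite !INRE.
  apply: le_trans (markov_count (F := fun T => (1 + x) ^ Xsum T) _ _) _.
  - by move=> T _; apply/RleP/pow_le; lra.
  - move=> T _; case: Rle_dec => // le_aX _.
    by apply/RleP/exp_ln_le_pow => //; lra.
  under eq_bigr do rewrite RpowE.
  apply: le_trans (exponential_moment (introT RleP x_ge0) m1_gt0 sz0_le_m1 size_sz) _.
  rewrite ler_wpM2l ?ler0n //.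
  by have := pow_le_exp (k * S) y_ge0; rewrite RpowE /y RmultE RdivE !INRE => /RleP.
have -> : x * INR s * INR S / INR m1 * INR k - a * ln (1 + x)
    = y * INR (k * S) - a * ln (1 + x) by rewrite mult_INR /y; field; lra.
rewrite /prob -/Omega -/Event /Rminus exp_plus exp_Ropp -/c.
have c_gt0 : 0 < c by apply: exp_pos.
apply/RleP; rewrite RdivE RmultE RinvE.
rewrite ler_pdivrMr; last exact/RltP.
rewrite mulrAC ler_pdivlMr; last exact/RltP.
by rewrite (mulrC (exp _)); apply/RleP.
Qed.

(* With q = s S / m1 and 1 + x = t / q, the exponent of [overlap_tail_bound]
   at a = t k is at most - ln (t / (6 q)) t k, as ln 6 > 1. *)
Lemma optimized_exponent (q t k : R) : 0 < q -> 6 * q < t -> 0 <= k ->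
  (t / q - 1) * q * k - t * k * ln (t / q) <= - ln (t / (6 * q)) * t * k.
Proof.
move=> q_gt0 lt_6q_t k_ge0.
have ln6_gt1 : 1 < ln 6.
  rewrite -{1}(ln_exp 1); apply: ln_increasing; first exact: exp_pos.
  by have := exp_le_3; lra.
have split_ln : ln (t / q) = ln 6 + ln (t / (6 * q)).
  by rewrite -ln_mult; [congr ln; field | | apply: Rdiv_lt_0_compat]; lra.
have tk_ge0 : 0 <= t * k by apply: Rmult_le_pos; lra.
have -> : (t / q - 1) * q * k = t * k - q * k by field; lra.
rewrite split_ln; nra.
Qed.

Lemma overlap_tail_bound_opt m1 k s sz (t : R) :
  (0 < m1)%N -> (sz 0 <= m1)%N ->
  (forall i, (i < k)%N -> (sz i.+1 <= s /\ sz i.+1 <= m1)%N) ->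
  let q := INR s * INR (\sum_(j < k.+1) sz j) / INR m1 in
  0 < q -> 6 * q < t ->
  prob m1 k sz (fun T => if Rle_dec (t * INR k) (INR (Xsum T)) then true else false)
    <= exp (- ln (t / (6 * q)) * t * INR k).
Proof.
move=> m1_gt0 sz0_le_m1 size_sz q q_gt0 lt_6q_t.
have x_ge0 : 0 <= t / q - 1.
  have -> : t / q - 1 = (t - q) / q by field; lra.
  by apply: Rmult_le_pos; [lra | apply/Rlt_le/Rinv_0_lt_compat].
have := overlap_tail_bound (t * INR k) x_ge0 m1_gt0 sz0_le_m1 size_sz.
rewrite Rplus_minus; set x := t / q - 1.
have -> : x * INR s * INR (\sum_(j < k.+1) sz j) / INR m1 * INR k = x * q * INR k.
  by rewrite /q; field; apply: not_0_INR; lia.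
move=> /Rle_trans; apply; rewrite /x.
exact/exp_monotone/optimized_exponent/pos_INR.
Qed.

End RealBounds.

Open Scope R_scope.

Theorem proposition4p8 :
  exists C_hg : R, (1 < C_hg)%R /\
  forall (m1 k s : nat) (sz : nat -> nat),
    (0 < m1)%N -> (0 < k)%N -> (0 < s)%N ->
    (sz 0 <= m1)%N ->
    (forall j, (1 <= j <= k)%N -> (1 <= sz j <= s)%N /\ (sz j <= m1)%N) ->
    let S := (\sum_(j < k.+1) sz j)%N in
    let r := (6 * INR S * INR s / INR m1)%R in
    forall t : R, (Rmax r 1 < t)%R ->
      (prob m1 k sz (fun T => if Rle_dec (t * INR k) (INR (Xsum T)) then true else false)
       <= C_hg ^ k * exp (- (ln (t / r)) * t * INR k))%R.
Proof.
exists 2; split; first lra.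
move=> m1 k s sz m1_gt0 k_gt0 s_gt0 sz0_le_m1 size_sz S r t /Rmax_Rlt[lt_r_t _].
have size_tail i : (i < k)%N -> (sz i.+1 <= s /\ sz i.+1 <= m1)%N.
  by move=> lt_ik; have [/andP[_ ->] ->] := size_sz i.+1 lt_ik.
have S_gt0 : (0 < S)%N.
  have [/andP[sz1_gt0 _] _] : (0 < sz 1 <= s /\ sz 1 <= m1)%N.
    by apply: size_sz; rewrite k_gt0.
  by rewrite /S (bigD1 (Ordinal (k_gt0 : 1 < k.+1)%N)) //= ltn_addr.
have INR_gt0 n : (0 < n)%N -> 0 < INR n by move=> n_gt0; apply: lt_0_INR; apply/ssrnat.ltP.
set q := INR s * INR S / INR m1.
have q_gt0 : 0 < q.
  by apply: Rdiv_lt_0_compat; [apply: Rmult_lt_0_compat|]; apply: INR_gt0.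
have r_eq : r = 6 * q by rewrite /r /q; field; apply: not_0_INR; lia.
rewrite r_eq in lt_r_t *.
apply: Rle_trans (overlap_tail_bound_opt m1_gt0 sz0_le_m1 size_tail q_gt0 lt_r_t) _.
rewrite -/S -/q.
have two_pow_ge1 : 1 <= 2 ^ k by apply: pow_R1_Rle; lra.
have := exp_pos (- ln (t / (6 * q)) * t * INR k); nra.
Qed.
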